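(* Let $G$ be a finite simple connected graph and $H$ an induced subgraph of $G$ with $\mathrm{diam}(H)=2$. If $\beta(H)=n(H)-t$ for some positive integer $t$, then $\beta(G)\le n(G)-t$.
   Context: $n(X)$ denotes the number of vertices of a graph $X$. For an ordered set $W=\{w_1,\dots,w_k\}$ of vertices of a connected graph $X$, $r(v|W)=(d_X(v,w_1),\dots,d_X(v,w_k))$ with $d_X$ the shortest-path distance; $W$ is a resolving set if distinct vertices have distinct vectors $r(\cdot|W)$, and $\beta(X)$, the metric dimension, is the minimum size of a resolving set. *)

From mathcomp Require Import all_boot.
Set Implicit Arguments. Unset Strict Implicit. Unset Printing Implicit Defensive.

(* A simple graph is given by a vertex type T : finType and an edge relation
   e : rel T that is symmetric and irreflexive.  An induced subgraph is given
   by its vertex set S : {set T} (edges = those of e between vertices of S). *)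

Section Graph.
Variables (T : finType) (e : rel T).

(* walk S k u v : there is a walk of length k from u to v in G[S]
   (all vertices after u lie in S). *)
Fixpoint walk (S : {set T}) (k : nat) (u v : T) : bool :=
  if k is k'.+1 then [exists w in S, e u w && walk S k' w v] else u == v.

(* Shortest-path distance in the induced subgraph G[S]: the least k with a
   walk of length k (searched up to #|T|, which suffices since a shortest
   walk has at most #|T| - 1 edges); #|T|.+1 if v is unreachable. *)
Definition dist (S : {set T}) (u v : T) : nat :=
  find (fun k => walk S k u v) (iota 0 #|T|.+1).

Definition connected_in (S : {set T}) : Prop :=
  forall u v, u \in S -> v \in S -> exists k, walk S k u v.

Definition diam_eq2 (S : {set T}) : Prop :=
  (forall u v, u \in S -> v \in S -> dist S u v <= 2) /\
  (exists u v, [/\ u \in S, v \in S & dist S u v = 2]).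

Definition resolving (S W : {set T}) : bool :=
  (W \subset S) &&
  [forall u in S, forall v in S,
     [forall w in W, dist S u w == dist S v w] ==> (u == v)].

Definition metric_dim (S : {set T}) : nat :=
  \big[minn/#|S|]_(W : {set T} | resolving S W) #|W|.

End Graph.

(* Let W be a metric basis of H, so #|W| = n(H) - t.  Then W together with
   all vertices outside H resolves G: a vertex outside H lies in the set, so
   it is the only vertex at distance 0 from itself; two vertices of H are
   separated by W because distances at most 2 in an induced subgraph are the
   distances of G (distance 1 is adjacency, and a vertex pair that is
   non-adjacent in H is non-adjacent in G).  Since diam(H) = 2, this applies
   to all pairs of vertices of H, and the resolving set has at most
   n(H) - t + (n(G) - n(H)) vertices. *)

From mathcomp Require Import all_boot order.
From mathcomp Require Import zify.
Set Implicit Arguments.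
Unset Strict Implicit.
Unset Printing Implicit Defensive.
Import Order.TTheory.

Section Distances.
Variables (T : finType) (e : rel T).
Implicit Types (S : {set T}) (u v : T) (k : nat).

Lemma walk_subset S S' k u v :
  S \subset S' -> walk e S k u v -> walk e S' k u v.
Proof.
move=> sSS'; elim: k u => [//|k IHk] u /= /existsP[w /and3P[wS euw wv]].
by apply/existsP; exists w; rewrite (subsetP sSS') //= euw IHk.
Qed.

Lemma walk_le1_in S S' k u v : v \in S -> k <= 1 ->
  walk e S' k u v -> walk e S k u v.
Proof.
case: k => [//|[|//]] vS _ /existsP[w /and3P[_ euw /eqP wv]].
by apply/existsP; exists w; rewrite wv vS -wv euw /=.
Qed.

Lemma dist_eq0 S u v : (dist e S u v == 0) = (u == v).
Proof. by rewrite /dist /=; case: (u == v). Qed.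

Lemma dist_refl S u : dist e S u u = 0.
Proof. by apply/eqP; rewrite dist_eq0. Qed.

Lemma walk_lt_dist S k u v : k < dist e S u v -> walk e S k u v = false.
Proof.
move=> lt_k; have k_small : k < #|T|.+1.
  by apply: leq_trans lt_k _; rewrite -(size_iota 0 #|T|.+1) find_size.
by have := before_find 0 lt_k; rewrite nth_iota.
Qed.

Lemma dist_le_walk S k u v : walk e S k u v -> dist e S u v <= k.
Proof. by move=> wk; rewrite leqNgt; apply/negP => /walk_lt_dist; rewrite wk. Qed.

Lemma walk_dist S u v : dist e S u v <= #|T| -> walk e S (dist e S u v) u v.
Proof.
move=> d_small; have has_walk : has (fun k => walk e S k u v) (iota 0 #|T|.+1).
  by rewrite has_find size_iota.
by have := nth_find 0 has_walk; rewrite nth_iota.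
Qed.

Lemma dist_le2_card S u v : dist e S u v <= 2 -> dist e S u v <= #|T|.
Proof.
have [-> _|neq_uv d_le2] := eqVneq u v; first by rewrite dist_refl.
have : 1 < #|T| by apply/card_gt1P; exists u, v.
by move: d_le2; lia.
Qed.

(* A shortest walk of length at most 2 in G[S] cannot be shortcut in a larger
   induced subgraph, since a walk of length at most 1 has no inner vertex. *)
Lemma dist_supset_le2 S S' u v : S \subset S' -> v \in S ->
  dist e S u v <= 2 -> dist e S' u v = dist e S u v.
Proof.
move=> sSS' vS d_le2; set d := dist e S u v.
have le_d'd : dist e S' u v <= d.
  by apply/dist_le_walk/(walk_subset sSS')/walk_dist/dist_le2_card.
apply/eqP; rewrite eqn_leq le_d'd leqNgt; apply/negP => lt_d'd.
have walk_d' := walk_dist (dist_le2_card (leq_trans le_d'd d_le2)).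
have d'_le1 : dist e S' u v <= 1 by move: lt_d'd d_le2; lia.
by have := walk_lt_dist lt_d'd; rewrite (walk_le1_in vS d'_le1 walk_d').
Qed.

Lemma dist_setT_diam2 S u v : diam_eq2 e S -> u \in S -> v \in S ->
  dist e [set: T] u v = dist e S u v.
Proof. by move=> [diam_le2 _] uS vS; rewrite (dist_supset_le2 (subsetT S)) ?diam_le2. Qed.

End Distances.

Section MetricDimension.
Variables (T : finType) (e : rel T).
Implicit Types (S W : {set T}).

Lemma resolving_refl S : resolving e S S.
Proof.
rewrite /resolving subxx; apply/forall_inP => u _; apply/forall_inP => v vS.
by apply/implyP => /forall_inP/(_ v vS)/eqP; rewrite dist_refl => /eqP; rewrite dist_eq0.
Qed.

Lemma metric_dim_min S W : resolving e S W -> metric_dim e S <= #|W|.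
Proof. exact: (@bigmin_le_cond _ nat _ #|S| W). Qed.

Lemma metric_dim_attained S :
  {W | resolving e S W & #|W| = metric_dim e S}.
Proof.
have [W resW dimE] := @eq_bigmin _ nat _ #|S| _ _ (fun W => #|W|) (resolving_refl S)
  (fun W (resW : resolving e S W) => subset_leq_card (andP resW).1).
by exists W; rewrite // /metric_dim dimE.
Qed.

Lemma resolving_setUC S W :
  (forall u w, u \in S -> w \in W -> dist e [set: T] u w = dist e S u w) ->
  resolving e S W -> resolving e [set: T] (W :|: ~: S).
Proof.
move=> distE /andP[sWS /forall_inP resW].
rewrite /resolving subsetT; apply/forall_inP => u _; apply/forall_inP => v _.
apply/implyP => /forall_inP same_dist.
have outside x : x \notin S -> x \in W :|: ~: S by rewrite !inE => ->; rewrite orbT.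
have [uS|uS] := boolP (u \in S); last first.
  by have := same_dist u (outside u uS); rewrite dist_refl eq_sym dist_eq0 eq_sym.
have [vS|vS] := boolP (v \in S); last first.
  by have := same_dist v (outside v vS); rewrite dist_refl dist_eq0.
apply: (implyP (forall_inP (resW u uS) v vS)); apply/forall_inP => w wW.
by rewrite -!distE // same_dist // inE wW.
Qed.

End MetricDimension.

Theorem corollary2p6 (T : finType) (e : rel T)
  (e_sym : symmetric e) (e_irr : irreflexive e)
  (G_conn : connected_in e [set: T])
  (S : {set T}) (H_diam : diam_eq2 e S) (t : nat) (t_pos : 0 < t) :
  metric_dim e S + t = #|S| ->
  metric_dim e [set: T] + t <= #|T|.
Proof.
move=> dimS; have [W resW cardW] := metric_dim_attained e S.
have sWS := (andP resW).1.
have resG : resolving e [set: T] (W :|: ~: S).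
  apply: resolving_setUC resW => u w uS wW.
  by rewrite (dist_setT_diam2 H_diam) // (subsetP sWS).
have dimG := metric_dim_min resG.
have cardU := (leq_card_setU W (~: S)).1.
have cardC := cardsC S.
lia.
Qed.
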